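(* Let $G=(V,E)$ be a finite weakly connected directed multigraph (loops allowed) in which every vertex has even degree, and let $M=(M_e)_{e\in E}$ with $M_e\in M_n(\mathbb C)$. Then $$|T_G(M)|\le n\prod_{e\in E}\|M_e\|.$$ Moreover, if $f\in E$ and $M_f$ has rank $r$, then $$|T_G(M)|\le\sqrt{rn}\prod_{e\in E}\|M_e\|.$$
   Context: A directed multigraph $G=(V,E)$ consists of finite sets $V,E$ and maps $e\mapsto e_-$ (origin) and $e\mapsto e_+$ (terminus) from $E$ to $V$; $e_-=e_+$ is allowed. Weakly connected means connected after forgetting orientations. The degree of $v$ is $\deg(v)=\sum_{e\in E}(\mathbf 1(v=e_-)+\mathbf 1(v=e_+))$. For $M=(M_e)_{e\in E}$, $$T_G(M)=\sum_{\mathbf i=(i_v)_{v\in V}\in\{1,\dots,n\}^V}\ \prod_{e\in E}(M_e)_{i_{e_-}i_{e_+}}.$$ $\|\cdot\|$ is the operator norm. *)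

From HB Require Import structures.
From mathcomp Require Import all_boot all_order all_algebra.
From mathcomp Require Import classical_sets reals complex.
Set Implicit Arguments. Unset Strict Implicit. Unset Printing Implicit Defensive.
Import Order.TTheory GRing.Theory Num.Theory.
Local Open Scope ring_scope.

Definition cmod (R : realType) (z : R[i]) : R := Normc.normc z.

Definition vnorm (R : realType) (n : nat) (x : 'cV[R[i]]_n) : R :=
  Num.sqrt (\sum_(k < n) cmod (x k 0) ^+ 2).

Definition opnorm (R : realType) (n : nat) (A : 'M[R[i]]_n) : R :=
  sup [set y : R | exists x : 'cV[R[i]]_n, vnorm x <= 1 /\ y = vnorm (A *m x)].

(* A directed multigraph: finite vertex set V, finite edge set E,
   origin map src and terminus map tgt (loops allowed). *)

Definition und_adj (V E : finType) (src tgt : E -> V) : rel V :=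
  fun u v => [exists e, ((src e == u) && (tgt e == v)) || ((src e == v) && (tgt e == u))].

Definition weakly_connected (V E : finType) (src tgt : E -> V) : Prop :=
  (0 < #|V|)%N /\ forall u v : V, connect (und_adj src tgt) u v.

(* deg v = sum_e (1(v = e_-) + 1(v = e_+)); a loop contributes 2. *)
Definition deg (V E : finType) (src tgt : E -> V) (v : V) : nat :=
  (#|[set e | src e == v]| + #|[set e | tgt e == v]|)%N.

Definition TG (R : realType) (V E : finType) (src tgt : E -> V) (n : nat)
  (M : E -> 'M[R[i]]_n) : R[i] :=
  \sum_(i : {ffun V -> 'I_n}) \prod_(e : E) M e (i (src e)) (i (tgt e)).

From HB Require Import structures.
From mathcomp Require Import classical_sets reals complex.
From mathcomp Require Import all_boot all_order all_algebra zify ring.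
From mathcomp Require Import sesquilinear spectral.
Set Implicit Arguments. Unset Strict Implicit. Unset Printing Implicit Defensive.
Import Order.TTheory GRing.Theory Num.Theory.
Local Open Scope ring_scope.

(* Fix an Eulerian circuit of G starting with the edge f; it exists because G
   is connected and all its degrees are even. Read T_G(M) dart by dart along
   the circuit, summing out the label of a vertex as soon as it has been
   visited for the last time. After k darts this leaves a vector Z_k indexed by
   the labels of the active vertices (the base point and the vertices visited
   both before and after step k). Traversing a dart of e from t to w either
   multiplies Z_k entrywise by a row of M_e (if t stays active) or applies
   M_e^T in the coordinate of t (if t is finished), with M_e transposed for a
   backward dart; either way |Z_{k+1}| <= |M_e| |Z_k|. The first dart gives
   |Z_1|^2 <= |M_f|_HS^2, and T_G(M) is the sum of the n entries of the last
   vector, so by Cauchy-Schwarz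
     |T_G(M)|^2 <= n |M_f|_HS^2 prod_{e <> f} |M_e|^2.
   Finally |M_f|_HS^2 <= rank(M_f) |M_f|^2 <= n |M_f|^2. *)

Section LabellingSums.
Variables (V : finType) (n : nat).
Local Notation labelling := {ffun V -> 'I_n}.
Implicit Types (S : {set V}) (s t : labelling) (u v : V) (c : 'I_n).

Definition agree_off S s t := [forall u, (u \notin S) ==> (t u == s u)].

Definition upd s v c : labelling := [ffun u => if u == v then c else s u].

Definition sum_on (T : nmodType) S s (F : labelling -> T) :=
  \sum_(t | agree_off S s t) F t.

Lemma agree_offP S s t : reflect (forall u, u \notin S -> t u = s u) (agree_off S s t).
Proof.
apply: (iffP forallP) => [h u uS|h u]; first by move: (h u); rewrite uS => /eqP.
by apply/implyP => uS; rewrite h.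
Qed.

Lemma agree_off_refl S s : agree_off S s s.
Proof. by apply/agree_offP. Qed.

Lemma updE s v c u : upd s v c u = if u == v then c else s u.
Proof. by rewrite ffunE. Qed.

Lemma upd_eq s v c : upd s v c v = c.
Proof. by rewrite updE eqxx. Qed.

Lemma upd_neq s v c u : u != v -> upd s v c u = s u.
Proof. by rewrite updE => /negbTE ->. Qed.

Lemma upd_upd s v c c' : upd (upd s v c) v c' = upd s v c'.
Proof. by apply/ffunP => u; rewrite !updE; case: eqP. Qed.

Lemma upd_id s v c : s v = c -> upd s v c = s.
Proof. by move=> <-; apply/ffunP => u; rewrite !updE; case: eqP => // ->. Qed.

Lemma upd_comm s v w c d : v != w -> upd (upd s v c) w d = upd (upd s w d) v c.
Proof.
move=> vw; apply/ffunP => u; rewrite !updE.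
by case: (eqVneq u w) => [->|//]; rewrite eq_sym (negbTE vw).
Qed.

Lemma agree_off_upd S s v c t : v \notin S ->
  agree_off S (upd s v c) t = agree_off (v |: S) s t && (t v == c).
Proof.
move=> vS; apply/idP/andP => [/agree_offP h|[/agree_offP h /eqP tv]].
  split; last by rewrite h // upd_eq.
  apply/agree_offP => u; rewrite in_setU1 negb_or => /andP[uv uS].
  by rewrite h // upd_neq.
apply/agree_offP => u uS; case: (eqVneq u v) => [->|uv]; first by rewrite upd_eq.
by rewrite upd_neq // h // in_setU1 negb_or uv.
Qed.

Section NmodSums.
Variable T : nmodType.
Implicit Types F G : labelling -> T.

Lemma sum_on0 s F : sum_on set0 s F = F s.
Proof.
rewrite /sum_on (big_pred1 s) // => t /=.
apply/idP/eqP => [/agree_offP h|->]; last exact: agree_off_refl.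
by apply/ffunP => u; rewrite h ?inE.
Qed.

Lemma sum_on_setU1 S s v F : v \notin S ->
  sum_on (v |: S) s F = \sum_c sum_on S (upd s v c) F.
Proof.
move=> vS; rewrite /sum_on.
under [RHS]eq_bigr do rewrite big_mkcond.
rewrite exchange_big /= big_mkcond; apply: eq_bigr => t _.
under eq_bigr do rewrite agree_off_upd //.
rewrite (bigD1 (t v)) //= eqxx andbT big1 ?addr0 // => c cne.
by rewrite eq_sym (negbTE cne) andbF.
Qed.

Lemma sum_on_set1 s v F : sum_on [set v] s F = \sum_c F (upd s v c).
Proof.
rewrite -[[set v]]setU0 sum_on_setU1 ?inE //.
by apply: eq_bigr => c _; rewrite sum_on0.
Qed.

Lemma sum_on_upd S s v c F : v \notin S ->
  sum_on S (upd s v c) F = sum_on S s (fun t => F (upd t v c)).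
Proof.
move=> vS; rewrite /sum_on.
rewrite (reindex_onto (fun t => upd t v c) (fun t => upd t v (s v))); last first.
  by move=> t /agree_offP h; rewrite upd_upd upd_id // h // upd_eq.
apply: eq_bigl => t; rewrite upd_upd.
apply/andP/idP => [[/agree_offP h /eqP e]|/agree_offP h]; last first.
  split; last by apply/eqP; apply: upd_id; rewrite h.
  apply/agree_offP => u uS; rewrite !updE; case: eqP => // _; exact: h.
apply/agree_offP => u uS; case: (eqVneq u v) => [->|uv].
  by rewrite -{1}e upd_eq.
by move: (h u uS); rewrite !upd_neq.
Qed.

Lemma eq_sum_on S s F G : (forall t, agree_off S s t -> F t = G t) ->
  sum_on S s F = sum_on S s G.
Proof. exact: eq_bigr. Qed.

Lemma sum_on_sum (I : finType) S s (F : labelling -> I -> T) :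
  sum_on S s (fun t => \sum_i F t i) = \sum_i sum_on S s (fun t => F t i).
Proof. exact: exchange_big. Qed.

Lemma sum_on_setU1_upd S s v F : v \notin S ->
  sum_on (v |: S) s F = sum_on S s (fun t => \sum_c F (upd t v c)).
Proof.
by move=> vS; rewrite sum_on_setU1 // sum_on_sum; apply: eq_bigr => c _; rewrite sum_on_upd.
Qed.

Lemma sum_on_setT s F : sum_on setT s F = \sum_t F t.
Proof. by apply: eq_bigl => t; apply/agree_offP => u; rewrite inE. Qed.

End NmodSums.

Lemma sum_on_mull (K : pzSemiRingType) S s (F : labelling -> K) (c : K) :
  sum_on S s (fun t => c * F t) = c * sum_on S s F.
Proof. by rewrite /sum_on mulr_sumr. Qed.

Lemma sum_on_mulr (K : pzSemiRingType) S s (F : labelling -> K) (c : K) :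
  sum_on S s (fun t => F t * c) = sum_on S s F * c.
Proof. by rewrite /sum_on mulr_suml. Qed.

Lemma ler_sum_on (K : numDomainType) S s (F G : labelling -> K) :
  (forall t, agree_off S s t -> F t <= G t) -> sum_on S s F <= sum_on S s G.
Proof. exact: ler_sum. Qed.

End LabellingSums.

Section EulerCircuit.
Variables (V E : finType) (src tgt : E -> V).

(* A dart traverses its edge forwards iff [d.2]. *)
Definition dart := (E * bool)%type.
Definition dtail (d : dart) := if d.2 then src d.1 else tgt d.1.
Definition dhead (d : dart) := if d.2 then tgt d.1 else src d.1.

Fixpoint walk (x : V) (s : seq dart) : bool :=
  if s is d :: s' then (dtail d == x) && walk (dhead d) s' else true.
Definition wend x (s : seq dart) := last x (map dhead s).
Definition trail x s := walk x s && uniq (map fst s).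
Definition incident v (d : dart) := (dtail d == v) || (dhead d == v).

Lemma walk_cat x s1 s2 : walk x (s1 ++ s2) = walk x s1 && walk (wend x s1) s2.
Proof. by elim: s1 x => [|d s1 IH] x //=; rewrite IH andbA. Qed.

Lemma wend_cat x s1 s2 : wend x (s1 ++ s2) = wend (wend x s1) s2.
Proof. by rewrite /wend map_cat last_cat. Qed.

Lemma wend_rcons x s d : wend x (rcons s d) = dhead d.
Proof. by rewrite /wend map_rcons last_rcons. Qed.

Lemma dtail_visited x s d : walk x s -> d \in s -> dtail d \in x :: map dhead s.
Proof.
elim: s x => [|d' s IH] x //= /andP[/eqP tx ws]; rewrite inE => /orP[/eqP->|ds].
  by rewrite tx mem_head.
by move: (IH _ ws ds); rewrite !inE => /orP[->|->]; rewrite ?orbT.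
Qed.

Lemma walk_split x s v : v \in x :: map dhead s ->
  exists p1 p2, s = p1 ++ p2 /\ wend x p1 = v.
Proof.
elim: s x => [|d s IH] x; first by rewrite inE => /eqP ->; exists [::], [::].
rewrite inE => /orP[/eqP ->|]; first by exists [::], (d :: s).
by move=> /IH [p1 [p2 [-> e]]]; exists (d :: p1), p2.
Qed.

Lemma closed_walk_rot x p1 p2 : walk x (p1 ++ p2) -> wend x (p1 ++ p2) = x ->
  walk (wend x p1) (p2 ++ p1) /\ wend (wend x p1) (p2 ++ p1) = wend x p1.
Proof.
rewrite walk_cat wend_cat => /andP[w1 w2] e.
by rewrite walk_cat w2 e w1 wend_cat e.
Qed.

Lemma perm_edges_rot (p1 p2 : seq dart) :
  perm_eq (map fst (p2 ++ p1)) (map fst (p1 ++ p2)).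
Proof. by rewrite !map_cat perm_catC. Qed.

Lemma dtail_towards e v : (src e == v) || (tgt e == v) -> dtail (e, src e == v) = v.
Proof. by rewrite /dtail /=; case: eqP => //= _ /eqP. Qed.

Lemma trail_rcons x s d : trail x s -> dtail d = wend x s -> d.1 \notin map fst s ->
  trail x (rcons s d).
Proof.
case/andP=> ws us td dn.
by rewrite /trail -cats1 walk_cat ws /= td eqxx map_cat cats1 rcons_uniq dn us.
Qed.

Lemma trail_size x s : trail x s -> (size s <= #|E|)%N.
Proof.
by case/andP=> _ us; rewrite -(size_map fst) -(card_uniqP us) max_card.
Qed.

Definition degL (l : seq E) v :=
  (count (fun e => src e == v) l + count (fun e => tgt e == v) l)%N.

Lemma deg_degL v : deg src tgt v = degL (index_enum E) v.
Proof. by rewrite /deg /degL -!sum1dep_card !sum1_count. Qed.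

Lemma degL_cat l1 l2 v : degL (l1 ++ l2) v = (degL l1 v + degL l2 v)%N.
Proof. by rewrite /degL !count_cat addnACA. Qed.

Lemma odd_degL_walk x s v : walk x s ->
  odd (degL (map fst s) v) = (v == x) (+) (v == wend x s).
Proof.
elim: s x => [|d s IH] x /=; first by rewrite addbb.
case/andP=> /eqP tx /IH IHs.
rewrite /degL /= addnACA oddD -/(degL (map fst s) v) IHs.
rewrite -tx /wend /= /dtail /dhead.
by case: d.2; rewrite oddD ![v == _]eq_sym; case: (src d.1 == v); case: (tgt d.1 == v);
  case: (_ == v); case: (v == _).
Qed.

Hypothesis even_deg : forall v, ~~ odd (deg src tgt v).

Lemma odd_degL_unused l v : uniq l -> odd (degL l v) ->
  exists2 e, e \notin l & (src e == v) || (tgt e == v).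
Proof.
move=> ul odd_l; pose l' := [seq e <- index_enum E | e \notin l].
have permE : perm_eq (index_enum E) (l ++ l').
  apply: uniq_perm => [||e]; first exact: index_enum_uniq.
    rewrite cat_uniq ul filter_uniq ?index_enum_uniq // andbT.
    by apply/hasPn => e; rewrite mem_filter => /andP[].
  by rewrite mem_cat mem_filter mem_index_enum andbT orbN.
have : (0 < degL l' v)%N.
  have split_deg : degL (index_enum E) v = (degL l v + degL l' v)%N.
    by rewrite -degL_cat /degL !(permP permE).
  by move: (even_deg v); rewrite deg_degL split_deg oddD odd_l; case: (degL l' v).
rewrite /degL addn_gt0 -!has_count => /orP[] /hasP[e];
  by rewrite mem_filter => /andP[el _] he; exists e; rewrite // he ?orbT.
Qed.

Hypothesis connected : forall u v, connect (und_adj src tgt) u v.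

(* Otherwise the visited vertices would be closed under adjacency, hence all of [V]. *)
Lemma unused_edge_at_visited x s e0 : walk x s -> e0 \notin map fst s ->
  exists2 e, e \notin map fst s &
    exists2 v, v \in x :: map dhead s & (src e == v) || (tgt e == v).
Proof.
move=> ws e0n; set l := map fst s; pose W := [pred v | v \in x :: map dhead s].
case: (boolP [exists e, (e \notin l) && ((src e \in W) || (tgt e \in W))]).
  case/existsP=> e /andP[en /orP[h|h]]; exists e => //;
  by [exists (src e); rewrite ?eqxx | exists (tgt e); rewrite ?eqxx ?orbT].
rewrite negb_exists => /forallP h; exfalso.
have endsW g : g \in l -> (src g \in W) && (tgt g \in W).
  case/mapP=> d ds ->; have := dtail_visited ws ds.
  have : dhead d \in W by rewrite /= inE map_f ?orbT.
  by rewrite /dtail /dhead /=; case: d.2 => -> ->.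
have closedW : closed (und_adj src tgt) W.
  move=> u v /existsP [g hg]; case: (boolP (g \in l)) => gl.
    by case/andP: (endsW g gl) => a b; case/orP: hg => /andP[/eqP <- /eqP <-]; rewrite a b.
  move: (h g); rewrite gl /= negb_or => /andP[a b].
  by case/orP: hg => /andP[/eqP su /eqP tv]; move: a b; rewrite su tv => /negbTE -> /negbTE ->.
have allW v : v \in W by rewrite -(closed_connect closedW (connected x v)) /= mem_head.
by move: (h e0); rewrite e0n /= !allW.
Qed.

(* An open trail ends at a vertex of odd degree in the trail, so it can be
   prolonged by an unused edge; a closed trail missing some edge is rotated to
   start at a visited vertex with an unused incident edge. *)
Lemma trail_extend x s : trail x s ->
  (wend x s = x /\ forall e, e \in map fst s) \/
  exists x' s', trail x' s' /\ size s' = (size s).+1.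
Proof.
move=> ts; case/andP: (ts) => ws us.
case: (eqVneq (wend x s) x) => [closed_s|open_s]; last first.
  have [|e en ey] := @odd_degL_unused _ (wend x s) us.
    by rewrite (odd_degL_walk _ ws) eqxx (negbTE open_s).
  right; exists x, (rcons s (e, src e == wend x s)).
  by rewrite size_rcons trail_rcons // dtail_towards.
case: (boolP [forall e, e \in map fst s]) => [/forallP|]; first by left.
rewrite negb_forall => /existsP [e0 e0n]; right.
have [e en [v vW ev]] := unused_edge_at_visited ws e0n.
have [p1 [p2 [sp ep]]] := walk_split vW.
move: ws closed_s us en; rewrite sp => ws closed_s us en.
have [w2 e2] := closed_walk_rot ws closed_s; rewrite ep in w2 e2.
exists v, (rcons (p2 ++ p1) (e, src e == v)).
rewrite size_rcons !size_cat addnC trail_rcons ?dtail_towards ?e2 //.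
  by rewrite /trail w2 (perm_uniq (perm_edges_rot p1 p2)).
by rewrite (perm_mem (perm_edges_rot p1 p2)).
Qed.

Lemma covering_walk_visits x d s : walk x (d :: s) ->
  (forall e, e \in map fst (d :: s)) -> forall v, has (incident v) (d :: s).
Proof.
move=> /andP[/eqP tx _] all_s v; case: (eqVneq v x) => [->|vx].
  by rewrite /= /incident tx eqxx.
case/connectP: (connected v x) => p.
case: p => [_ /= xv|u p /= /andP[/existsP[e ve] _] _]; first by rewrite xv eqxx in vx.
have /mapP [d' d'_in d'e] := all_s e.
change (has (incident v) (d :: s)); apply/hasP; exists d' => //.
have : (src e == v) || (tgt e == v) by case/orP: ve => /andP[a b]; rewrite ?a ?b ?orbT.
by rewrite /incident /dtail /dhead -d'e; case: d'.2; rewrite // orbC.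
Qed.

Lemma euler_circuit_from x s : trail x s ->
  exists x' s', [/\ trail x' s', wend x' s' = x' & forall e, e \in map fst s'].
Proof.
move: {2}(#|E| - size s)%N (leqnn (#|E| - size s)) => k.
elim: k x s => [|k IH] x s hk ts;
  case: (trail_extend ts) => [[closed_s all_s]|[x' [s' [ts' ss']]]];
  try by exists x, s.
  by move: (trail_size ts'); rewrite ss'; lia.
by apply: (IH x' s') => //; move: (trail_size ts'); rewrite ss'; lia.
Qed.

Lemma euler_circuit f : exists x d s,
  [/\ trail x (d :: s), wend x (d :: s) = x, d.1 = f & forall e, e \in map fst (d :: s)].
Proof.
have [|x [s [/andP[ws us] closed_s all_s]]] := @euler_circuit_from (src f) [:: (f, true)].
  by rewrite /trail /= /dtail /= !eqxx.
have /mapP [d ds df] := all_s f.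
case/splitPr: ds ws closed_s us all_s => p1 p2 ws closed_s us all_s.
have [w2 e2] := closed_walk_rot ws closed_s.
exists (wend x p1), d, (p2 ++ p1); split=> //.
- by rewrite /trail w2 (perm_uniq (perm_edges_rot p1 (d :: p2))).
- by move=> e; rewrite (perm_mem (perm_edges_rot p1 (d :: p2))).
Qed.

End EulerCircuit.

Section ComplexMatrices.
Variable R : realType.
Local Notation C := R[i].
Local Open Scope complex_scope.

Definition cmod2 (z : C) : R := cmod z ^+ 2.
Definition sqnorm n (z : 'I_n -> C) : R := \sum_i cmod2 (z i).

Lemma cmod_ge0 (z : C) : 0 <= cmod z.
Proof. by case: z => a b; apply: sqrtr_ge0. Qed.

Lemma cmodE (z : C) : `|z| = (cmod z)%:C.
Proof. by case: z => a b; rewrite normc_def. Qed.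

Lemma cmodM (x y : C) : cmod (x * y) = cmod x * cmod y.
Proof. exact: Normc.normcM. Qed.

Lemma cmodR (r : R) : cmod r%:C = `|r|.
Proof. by rewrite /cmod /= expr0n addr0 sqrtr_sqr. Qed.

Lemma cmod_nat k : cmod (k%:R : C) = k%:R.
Proof.
have -> : (k%:R : C) = real_complex R k%:R by rewrite rmorph_nat.
by rewrite cmodR ger0_norm ?ler0n.
Qed.

Lemma ler_cmod_sum (I : Type) (r : seq I) (F : I -> C) :
  cmod (\sum_(i <- r) F i) <= \sum_(i <- r) cmod (F i).
Proof.
elim: r => [|a r IH]; first by rewrite !big_nil /cmod Normc.normc0.
by rewrite !big_cons; apply: le_trans (le_normcD _ _) _; apply: lerD.
Qed.

Lemma cmod2_ge0 z : 0 <= cmod2 z.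
Proof. exact: sqr_ge0. Qed.

Lemma cmod2E z : (cmod2 z)%:C = z * z^*.
Proof. by rewrite /cmod2 rmorphXn /= -cmodE normCK. Qed.

Lemma cmod2M x y : cmod2 (x * y) = cmod2 x * cmod2 y.
Proof. by rewrite /cmod2 cmodM exprMn. Qed.

Lemma cmod2R (r : R) : cmod2 r%:C = r ^+ 2.
Proof. by rewrite /cmod2 cmodR real_normK // num_real. Qed.

Lemma cmod2_0 : cmod2 0 = 0.
Proof. by rewrite cmod2R expr0n. Qed.

Lemma cmod2J z : cmod2 z^* = cmod2 z.
Proof. by case: z => a b; rewrite /cmod2 /cmod /= sqrrN. Qed.

Lemma cmod2_eq0 z : (cmod2 z == 0) = (z == 0).
Proof.
apply/idP/eqP => [|->]; last by rewrite cmod2_0.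
by rewrite /cmod2 expf_eq0 /= => /eqP; apply: Normc.eq0_normc.
Qed.

Lemma cmod2_le_sqr z (X : R) : 0 <= X -> (cmod2 z <= X ^+ 2) = (cmod z <= X).
Proof. by move=> X0; rewrite /cmod2 ler_pXn2r // nnegrE cmod_ge0. Qed.

Lemma sqnorm_ge0 n (z : 'I_n -> C) : 0 <= sqnorm z.
Proof. by apply: sumr_ge0 => i _; apply: cmod2_ge0. Qed.

Lemma sqnorm_eq0 n (z : 'I_n -> C) : sqnorm z = 0 -> z =1 (fun=> 0).
Proof.
move=> z0 i; apply/eqP; rewrite -cmod2_eq0; apply/eqP.
by apply: (psumr_eq0P _ z0) => // j _; apply: cmod2_ge0.
Qed.

Lemma cmod2_le_sqnorm n (z : 'I_n -> C) i : cmod2 (z i) <= sqnorm z.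
Proof. by rewrite /sqnorm (bigD1 i) //= lerDl sumr_ge0 // => j _; apply: cmod2_ge0. Qed.

Lemma sqnorm_delta n (a : 'I_n) : sqnorm (fun c => (c == a)%:R : C) = 1.
Proof.
rewrite /sqnorm (bigD1 a) //= eqxx big1 ?addr0 => [|c /negbTE ->]; last exact: cmod2_0.
by rewrite -[1 : C]/((1 : R)%:C) cmod2R expr1n.
Qed.

(* Expanding [A * (A B - X^2) = \sum_i (A b_i - X a_i)^2]. *)
Lemma cauchy_schwarz_real (I : finType) (a b : I -> R) :
  (\sum_i a i * b i) ^+ 2 <= (\sum_i a i ^+ 2) * (\sum_i b i ^+ 2).
Proof.
set A := \sum_i a i ^+ 2; set B := \sum_i b i ^+ 2; set X := \sum_i a i * b i.
have A0 : 0 <= A by apply: sumr_ge0 => i _; apply: sqr_ge0.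
have key : A * (A * B - X ^+ 2) = \sum_i (A * b i - X * a i) ^+ 2.
  transitivity (\sum_i (A ^+ 2 * b i ^+ 2 - (2%:R * A * X) * (a i * b i) + X ^+ 2 * a i ^+ 2)).
    by rewrite big_split /= sumrB -!mulr_sumr -/A -/B -/X /GRing.exp /=; ring.
  by apply: eq_bigr => i _; ring.
have [A_eq0|A_neq0] := eqVneq A 0.
  have a0 i : a i = 0.
    apply/eqP; rewrite -sqrf_eq0; apply/eqP.
    by apply: (psumr_eq0P _ A_eq0) => // j _; apply: sqr_ge0.
  by rewrite /X big1 ?expr0n ?A_eq0 ?mul0r // => i _; rewrite a0 mul0r.
have Ap : 0 < A by rewrite lt_def A_neq0 A0.
by rewrite -subr_ge0 -(pmulr_rge0 _ Ap) key; apply: sumr_ge0 => i _; apply: sqr_ge0.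
Qed.

Lemma cauchy_schwarz n (z w : 'I_n -> C) :
  cmod2 (\sum_i z i * w i) <= sqnorm z * sqnorm w.
Proof.
apply: le_trans (cauchy_schwarz_real (fun i => cmod (z i)) (fun i => cmod (w i))).
rewrite /cmod2 ler_pXn2r ?nnegrE ?cmod_ge0 ?sumr_ge0 // => [|i _]; last first.
  by rewrite mulr_ge0 ?cmod_ge0.
by apply: le_trans (ler_cmod_sum _ _) _; apply: ler_sum => i _; rewrite cmodM.
Qed.

Section OperatorNorm.
Variables (n : nat) (A : 'M[C]_n).

Lemma vnorm_sqnorm (x : 'cV[C]_n) : vnorm x = Num.sqrt (sqnorm (fun k => x k 0)).
Proof. by []. Qed.

Lemma opnorm_ub (x : 'cV[C]_n) : vnorm x <= 1 -> vnorm (A *m x) <= opnorm A.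
Proof.
move=> x1; apply: ub_le_sup; last by exists x.
exists (Num.sqrt (\sum_i sqnorm (A i))) => _ [y [y1 ->]].
rewrite vnorm_sqnorm; apply: ler_wsqrtr; apply: ler_sum => i _.
have y_le1 : sqnorm (fun k => y k 0) <= 1.
  by rewrite -(sqr_sqrtr (sqnorm_ge0 _)) exprn_ile1 ?sqrtr_ge0.
rewrite mxE; apply: le_trans (cauchy_schwarz _ _) _.
by rewrite -[X in _ <= X]mulr1 ler_wpM2l ?sqnorm_ge0.
Qed.

Lemma opnorm_ge0 : 0 <= opnorm A.
Proof.
apply: le_trans (opnorm_ub (x := 0) _); first exact: sqrtr_ge0.
by rewrite vnorm_sqnorm /sqnorm big1 ?sqrtr0 // => k _; rewrite mxE cmod2_0.
Qed.

(* Apply the definition of [opnorm] to the normalised vector [z / |z|]. *)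
Lemma sqnorm_mx_le (z : 'I_n -> C) :
  sqnorm (fun i => \sum_k A i k * z k) <= opnorm A ^+ 2 * sqnorm z.
Proof.
set s := sqnorm z; have s0 : 0 <= s := sqnorm_ge0 z.
have [s_eq0|s_neq0] := eqVneq s 0.
  rewrite s_eq0 mulr0 /sqnorm big1 // => i _.
  by rewrite big1 ?cmod2_0 // => k _; rewrite (sqnorm_eq0 s_eq0) mulr0.
have sp : 0 < s by rewrite lt_def s_neq0 s0.
pose x : 'cV[C]_n := \col_k (z k * (Num.sqrt s)^-1%:C).
have scale (u : C) : cmod2 (u * (Num.sqrt s)^-1%:C) = cmod2 u / s.
  by rewrite cmod2M cmod2R exprVn sqr_sqrtr.
have x1 : vnorm x = 1.
  rewrite vnorm_sqnorm /sqnorm (eq_bigr _ (fun k _ => congr1 cmod2 (mxE _ _ k 0))).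
  by under eq_bigr do rewrite scale; rewrite -mulr_suml divff // sqrtr1.
have := @opnorm_ub x; rewrite x1 lexx => /(_ isT).
rewrite vnorm_sqnorm -(ler_pXn2r (n := 2)) ?nnegrE ?sqrtr_ge0 ?opnorm_ge0 // sqr_sqrtr ?sqnorm_ge0 //.
rewrite /sqnorm (eq_bigr (fun i => cmod2 (\sum_k A i k * z k) / s)) -?mulr_suml ?ler_pdivrMr //.
move=> i _; rewrite mxE -scale mulr_suml.
by congr cmod2; apply: eq_bigr => k _; rewrite mxE mulrA.
Qed.

(* By duality: [|A^T z|^2 = <z, A conj(A^T z)> <= |z| |A| |A^T z|]. *)
Lemma sqnorm_trmx_le (z : 'I_n -> C) :
  sqnorm (fun b => \sum_a A a b * z a) <= opnorm A ^+ 2 * sqnorm z.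
Proof.
set u := fun b => \sum_a A a b * z a; set S := sqnorm u.
have S0 : 0 <= S := sqnorm_ge0 u.
have S_dual : S%:C = \sum_a z a * \sum_b A a b * (u b)^*.
  rewrite rmorph_sum /=.
  transitivity (\sum_b \sum_a A a b * z a * (u b)^*).
    by apply: eq_bigr => b _; rewrite cmod2E mulr_suml.
  rewrite exchange_big /=; apply: eq_bigr => a _; rewrite mulr_sumr.
  by apply: eq_bigr => b _; rewrite mulrCA mulrA.
have S2 : S ^+ 2 <= sqnorm z * (opnorm A ^+ 2 * S).
  rewrite -cmod2R S_dual; apply: le_trans (cauchy_schwarz _ _) _.
  rewrite ler_wpM2l ?sqnorm_ge0 //; apply: le_trans (sqnorm_mx_le _) _.
  by rewrite /S /sqnorm (eq_bigr _ (fun b _ => cmod2J (u b))).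
have [->|S_neq0] := eqVneq S 0; first by rewrite mulr_ge0 ?sqr_ge0 ?sqnorm_ge0.
have Sp : 0 < S by rewrite lt_def S_neq0 S0.
by move: S2; rewrite expr2 mulrA [sqnorm z * _]mulrC ler_pM2r.
Qed.

End OperatorNorm.

Definition hsnorm2 p q (B : 'M[C]_(p, q)) := \sum_i \sum_j cmod2 (B i j).

Lemma hsnorm2_tr p q (B : 'M[C]_(p, q)) : hsnorm2 B^T = hsnorm2 B.
Proof.
by rewrite /hsnorm2 exchange_big; apply: eq_bigr => i _; apply: eq_bigr => j _; rewrite mxE.
Qed.

Local Open Scope sesquilinear_scope.

Lemma hsnorm2_trace p q (B : 'M[C]_(p, q)) : (hsnorm2 B)%:C = \tr (B *m B^t*).
Proof.
rewrite rmorph_sum; apply: eq_bigr => i _; rewrite mxE rmorph_sum.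
by apply: eq_bigr => j _; rewrite -[LHS]/((cmod2 (B i j))%:C) cmod2E !mxE.
Qed.

(* [A Q^* Q = A], so [A] and [A Q^*] have the same Hilbert-Schmidt norm, and
   the [r] columns of [A Q^*] are images of unit vectors. *)
Lemma hsnorm2_unitary_le n r (X : 'M[C]_(n, r)) (Q : 'M[C]_(r, n)) :
  Q \is unitarymx -> hsnorm2 (X *m Q) <= r%:R * opnorm (X *m Q) ^+ 2.
Proof.
move=> Qu; set A := X *m Q.
have AQQ : A *m Q^t* *m Q = A by rewrite mulmxtVK.
have -> : hsnorm2 A = hsnorm2 (A *m Q^t*)^T.
  have AQ_AQ : A *m Q^t* *m (A *m Q^t*)^t* = A *m A^t*.
    by rewrite trmx_mul map_mxM trmxCK mulmxA AQQ.
  by apply: (@complexI R); rewrite hsnorm2_tr !hsnorm2_trace AQ_AQ.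
have row_Q j : sqnorm (fun b => (Q j b)^* ) = 1.
  apply: (@complexI R); rewrite rmorph_sum rmorph1 /=.
  move/unitarymxP: Qu => /matrixP /(_ j j); rewrite !mxE eqxx /= => QQjj.
  apply: etrans QQjj; apply: eq_bigr => b _.
  by rewrite -[LHS]/((cmod2 (Q j b)^* )%:C) cmod2J cmod2E !mxE.
have -> : r%:R * opnorm A ^+ 2 = \sum_(j < r) opnorm A ^+ 2.
  by rewrite sumr_const card_ord mulr_natl.
apply: ler_sum => j _.
have col_j : \sum_a cmod2 ((A *m Q^t*)^T j a) = sqnorm (fun a => \sum_b A a b * (Q j b)^* ).
  by apply: eq_bigr => a _; rewrite !mxE; congr cmod2; apply: eq_bigr => b _; rewrite !mxE.
by rewrite col_j; apply: le_trans (sqnorm_mx_le A _) _; rewrite row_Q mulr1.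
Qed.

(* The rows of [A] are combinations of [\rank A] orthonormal rows. *)
Lemma hsnorm2_le_rank n (A : 'M[C]_n) : hsnorm2 A <= (\rank A)%:R * opnorm A ^+ 2.
Proof.
have Qu : schmidt (row_base A) \is unitarymx by rewrite schmidt_unitarymx ?rank_leq_col.
have /submxP [X AXQ] : (A <= schmidt (row_base A))%MS.
  by apply: submx_trans (schmidt_sub _); rewrite eq_row_base.
by have := hsnorm2_unitary_le X Qu; rewrite -AXQ.
Qed.

End ComplexMatrices.

Section GraphSums.
Variable R : realType.
Local Notation C := R[i].

Section TransferStep.
Variables (V : finType) (n : nat) (N : 'M[C]_n) (lam : R).
Local Notation labelling := {ffun V -> 'I_n}.
Hypothesis N_tr_le : forall z, sqnorm (fun b => \sum_c N c b * z c) <= lam ^+ 2 * sqnorm z.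

Lemma row_sqnorm_le a : sqnorm (N a) <= lam ^+ 2.
Proof.
have row_a b : \sum_c N c b * (c == a)%:R = N a b.
  by rewrite (bigD1 a) //= eqxx mulr1 big1 ?addr0 // => c /negbTE ->; rewrite mulr0.
have := N_tr_le (fun c => (c == a)%:R).
by rewrite sqnorm_delta mulr1 /sqnorm; under eq_bigr do rewrite row_a.
Qed.

(* One dart from [t] to [w] read through [N]: [P] is the weight of the darts
   already read, [I] the set of finished and [A] that of active vertices. *)
Variables (P : labelling -> C) (I A : {set V}) (t w : V).
Hypotheses (tI : t \notin I) (wI : w \notin I) (tA : t \in A).
Hypothesis P_fresh : w \notin A -> forall r c, P (upd r w c) = P r.
Local Notation Z r := (sum_on I r P).

Lemma Z_fresh : w \notin A -> forall r c, Z (upd r w c) = Z r.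
Proof. by move=> wA r c; rewrite sum_on_upd //; apply: eq_sum_on => q _; rewrite P_fresh. Qed.

Lemma transfer_stay_rows r :
  sum_on (w |: A) r (fun q => cmod2 (sum_on I q (fun p => P p * N (p t) (p w))))
  <= sum_on A r (fun q => cmod2 (Z q) * sqnorm (N (q t))).
Proof.
have Z_mul q : sum_on I q (fun p => P p * N (p t) (p w)) = Z q * N (q t) (q w).
  by rewrite -sum_on_mulr; apply: eq_sum_on => p /agree_offP p_q; rewrite !p_q.
under eq_sum_on do rewrite Z_mul cmod2M.
have [wA|wA] := boolP (w \in A).
  have -> : w |: A = A by apply/setUidPr; rewrite sub1set.
  by apply: ler_sum_on => q _; rewrite ler_wpM2l ?cmod2_ge0 ?(cmod2_le_sqnorm (N (q t))).
have tw : t != w by apply: contraNneq wA => <-.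
rewrite sum_on_setU1_upd //; apply: ler_sum_on => q _.
rewrite /sqnorm mulr_sumr; apply: ler_sum => c _.
by rewrite Z_fresh // upd_eq upd_neq.
Qed.

Lemma transfer_stay r :
  sum_on (w |: A) r (fun q => cmod2 (sum_on I q (fun p => P p * N (p t) (p w))))
  <= lam ^+ 2 * sum_on A r (fun q => cmod2 (Z q)).
Proof.
apply: le_trans (transfer_stay_rows r) _; rewrite -sum_on_mull.
by apply: ler_sum_on => q _; rewrite mulrC ler_wpM2r ?cmod2_ge0 ?row_sqnorm_le.
Qed.

(* Summing out the label of [t] applies [N^T] in that coordinate. *)
Lemma transfer_leave r : t != w ->
  sum_on (w |: (A :\ t)) r
    (fun q => cmod2 (sum_on (t |: I) q (fun p => P p * N (p t) (p w))))
  <= lam ^+ 2 * sum_on A r (fun q => cmod2 (Z q)).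
Proof.
move=> tw.
have Z_contract q : sum_on (t |: I) q (fun p => P p * N (p t) (p w)) =
    \sum_c N c (q w) * Z (upd q t c).
  rewrite sum_on_setU1 //; apply: eq_bigr => c _.
  rewrite -sum_on_mull; apply: eq_sum_on => p /agree_offP p_q.
  by rewrite !p_q // upd_eq upd_neq 1?eq_sym // mulrC.
have sqnormZ : sum_on A r (fun q => cmod2 (Z q)) =
    sum_on (A :\ t) r (fun q => sqnorm (fun c => Z (upd q t c))).
  by rewrite -{1}(setD1K tA) sum_on_setU1_upd ?setD11.
under eq_sum_on do rewrite Z_contract.
rewrite sqnormZ -sum_on_mull.
have [wA|wA] := boolP (w \in A).
  have -> : w |: (A :\ t) = A :\ t by apply/setUidPr; rewrite sub1set in_setD1 eq_sym tw.
  apply: ler_sum_on => q _; apply: le_trans (N_tr_le _).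
  exact: (cmod2_le_sqnorm (fun b => \sum_c N c b * Z (upd q t c))).
rewrite sum_on_setU1_upd ?in_setD1 ?negb_and ?wA ?orbT //.
apply: ler_sum_on => q _; apply: le_trans (N_tr_le _).
rewrite /sqnorm; under eq_bigr => b _ do under eq_bigr => c _ do
  rewrite upd_eq upd_comm 1?eq_sym // Z_fresh //.
exact: lexx.
Qed.

End TransferStep.

Section AlongCircuit.
Variables (V E : finType) (src tgt : E -> V) (n : nat) (M : E -> 'M[C]_n).
Local Notation labelling := {ffun V -> 'I_n}.
Local Notation dtail := (dtail src tgt).
Local Notation dhead := (dhead src tgt).
Local Notation wend := (wend src tgt).
Local Notation incident := (incident src tgt).

(* The rows of [dmx d] are indexed by the label of the tail of [d]. *)
Definition dmx (d : dart E) : 'M[C]_n := if d.2 then M d.1 else (M d.1)^T.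

Lemma dmx_tr_le d (z : 'I_n -> C) :
  sqnorm (fun b => \sum_c dmx d c b * z c) <= opnorm (M d.1) ^+ 2 * sqnorm z.
Proof.
rewrite /dmx; case: d.2; first exact: sqnorm_trmx_le.
by rewrite /sqnorm; under eq_bigr do under eq_bigr do rewrite mxE; apply: sqnorm_mx_le.
Qed.

Lemma prod_dmx_perm (s : seq (dart E)) (q : labelling) :
  perm_eq (map fst s) (index_enum E) ->
  \prod_(d <- s) dmx d (q (dtail d)) (q (dhead d)) = \prod_e M e (q (src e)) (q (tgt e)).
Proof.
move=> s_perm; rewrite -(perm_big _ s_perm) big_map.
by apply: eq_bigr => d _; rewrite /dmx /dtail /dhead; case: d.2; rewrite ?mxE.
Qed.

Variables (x0 : V) (s : seq (dart E)) (d0 : dart E).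
Hypotheses (s_walk : walk src tgt x0 s) (s_closed : wend x0 s = x0).

Definition visited k v := has (incident v) (take k s).
Definition pending k v := has (incident v) (drop k s).

(* After [k] darts, the labels of the finished vertices are summed out, while
   those of the active vertices index the partial sum [Zpart k]. *)
Definition active k := [set v | (v == x0) || visited k v && pending k v].
Definition finished k := [set v | (v != x0) && visited k v && ~~ pending k v].

Definition weight k (r : labelling) :=
  \prod_(d <- take k s) dmx d (r (dtail d)) (r (dhead d)).
Definition Zpart k r := sum_on (finished k) r (weight k).
Definition Znorm2 k r := sum_on (active k) r (fun q => cmod2 (Zpart k q)).

Lemma active_finished k v : v \in active k -> v \notin finished k.
Proof. by rewrite !inE => /orP[->|/andP[_ ->]]; rewrite ?andbF. Qed.

Lemma dtail_nth k : (k < size s)%N -> dtail (nth d0 s k) = wend x0 (take k s).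
Proof.
move=> hk; move: s_walk; rewrite -{1}(cat_take_drop k s) walk_cat (drop_nth d0 hk) /=.
by case/and3P=> _ /eqP.
Qed.

Lemma has_incident_wend p : p != [::] -> has (incident (wend x0 p)) p.
Proof. by case/lastP: p => // p e _; rewrite wend_rcons has_rcons /incident eqxx orbT. Qed.

Section Step.
Variable k : nat.
Hypothesis k_lt : (k < size s)%N.
Let d := nth d0 s k.
Let t := dtail d.
Let w := dhead d.

Lemma take_succ : take k.+1 s = rcons (take k s) d.
Proof. exact: take_nth. Qed.

Lemma visited_succ v : visited k.+1 v = visited k v || incident v d.
Proof. by rewrite /visited take_succ has_rcons orbC. Qed.

Lemma pending_succ v : pending k v = incident v d || pending k.+1 v.
Proof. by rewrite /pending (drop_nth d0 k_lt). Qed.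

Lemma incident_tail : incident t d. Proof. by rewrite /incident eqxx. Qed.
Lemma incident_head : incident w d. Proof. by rewrite /incident eqxx orbT. Qed.

Lemma tail_active : t \in active k.
Proof.
rewrite inE; case: (posnP k) => [k0|k_gt0]; first by rewrite /t dtail_nth // k0 take0 eqxx.
rewrite pending_succ incident_tail /= andbT /visited /t dtail_nth //.
by rewrite has_incident_wend ?orbT // -size_eq0 size_take k_lt -lt0n.
Qed.

Lemma head_active : w \in active k.+1.
Proof.
have w_end : w = wend x0 (take k.+1 s) by rewrite take_succ wend_rcons.
rewrite inE visited_succ incident_head orbT /=.
case: (ltnP k.+1 (size s)) => k1_lt.
  by rewrite /pending (drop_nth d0 k1_lt) /= /incident w_end -dtail_nth // eqxx orbT.
by rewrite w_end (@take_oversize _ k.+1) // s_closed eqxx.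
Qed.

Lemma tail_unfinished : t \notin finished k.
Proof. by rewrite inE pending_succ incident_tail /= andbF. Qed.

Lemma head_unfinished : w \notin finished k.
Proof. by rewrite inE pending_succ incident_head /= andbF. Qed.

Lemma head_unfinished_succ : w \notin finished k.+1.
Proof. exact: active_finished head_active. Qed.

Lemma not_incident v : v != t -> v != w -> incident v d = false.
Proof. by move=> vt vw; rewrite /incident !(eq_sym _ v) (negbTE vt) (negbTE vw). Qed.

Lemma active_succ v : v != t -> v != w -> (v \in active k.+1) = (v \in active k).
Proof. by move=> vt vw; rewrite !inE visited_succ pending_succ not_incident ?orbF. Qed.

Lemma finished_succ v : v != t -> v != w -> (v \in finished k.+1) = (v \in finished k).
Proof. by move=> vt vw; rewrite !inE visited_succ pending_succ not_incident ?orbF. Qed.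

Lemma weight_succ r : weight k.+1 r = weight k r * dmx d (r t) (r w).
Proof. by rewrite /weight take_succ big_rcons. Qed.

Lemma weight_fresh : w \notin active k -> forall r c, weight k (upd r w c) = weight k r.
Proof.
rewrite inE negb_or pending_succ incident_head /= andbT => /andP[_ unvisited] r c.
rewrite /weight; apply: eq_big_seq => e e_in.
have : ~~ incident w e by move/hasPn: unvisited; apply.
by rewrite /incident negb_or => /andP[te he]; rewrite !upd_neq.
Qed.

Section TailStays.
Hypothesis t_active : t \in active k.+1.

Lemma finished_stay : finished k.+1 = finished k.
Proof.
apply/setP => v; case: (eqVneq v t) => [->|vt].
  by rewrite (negbTE (active_finished t_active)) (negbTE tail_unfinished).
case: (eqVneq v w) => [->|vw]; first by rewrite (negbTE head_unfinished_succ) (negbTE head_unfinished).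
exact: finished_succ.
Qed.

Lemma active_stay : active k.+1 = w |: active k.
Proof.
apply/setP => v; rewrite in_setU1; case: (eqVneq v w) => [->|vw]; first by rewrite head_active.
case: (eqVneq v t) => [->|vt]; first by rewrite t_active tail_active.
exact: active_succ.
Qed.

End TailStays.

Section TailLeaves.
Hypothesis t_inactive : t \notin active k.+1.

Lemma tail_neq_head : t != w.
Proof. by apply: contraNneq t_inactive => ->; apply: head_active. Qed.

Lemma finished_leave : finished k.+1 = t |: finished k.
Proof.
apply/setP => v; rewrite in_setU1; case: (eqVneq v t) => [->|vt].
  move: t_inactive; rewrite !inE visited_succ incident_tail orbT /= negb_or andbT.
  by case/andP=> -> ->.
case: (eqVneq v w) => [->|vw]; first by rewrite (negbTE head_unfinished_succ) (negbTE head_unfinished).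
exact: finished_succ.
Qed.

Lemma active_leave : active k.+1 = w |: (active k :\ t).
Proof.
apply/setP => v; rewrite in_setU1 in_setD1; case: (eqVneq v w) => [->|vw]; first by rewrite head_active.
case: (eqVneq v t) => [->|vt]; first by rewrite (negbTE t_inactive).
exact: active_succ.
Qed.

End TailLeaves.

Lemma Zpart_succ r :
  Zpart k.+1 r = sum_on (finished k.+1) r (fun q => weight k q * dmx d (q t) (q w)).
Proof. by apply: eq_sum_on => q _; rewrite weight_succ. Qed.

Lemma Znorm2_stay_rows r : t \in active k.+1 ->
  Znorm2 k.+1 r <= sum_on (active k) r (fun q => cmod2 (Zpart k q) * sqnorm (dmx d (q t))).
Proof.
move=> t_active; rewrite /Znorm2 (active_stay t_active).
under eq_sum_on do rewrite Zpart_succ (finished_stay t_active).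
by move: (transfer_stay_rows (dmx d) tail_unfinished head_unfinished tail_active weight_fresh r).
Qed.

Lemma Znorm2_succ_le r : Znorm2 k.+1 r <= opnorm (M d.1) ^+ 2 * Znorm2 k r.
Proof.
have N_tr_le := dmx_tr_le d.
have [t_active|t_inactive] := boolP (t \in active k.+1).
  rewrite /Znorm2 (active_stay t_active).
  under eq_sum_on do rewrite Zpart_succ (finished_stay t_active).
  by move: (transfer_stay N_tr_le tail_unfinished head_unfinished tail_active weight_fresh r).
rewrite /Znorm2 (active_leave t_inactive).
under eq_sum_on do rewrite Zpart_succ (finished_leave t_inactive).
by move: (transfer_leave N_tr_le tail_unfinished head_unfinished tail_active weight_fresh r
  (tail_neq_head t_inactive)).
Qed.

End Step.

Lemma Znorm2_first r : (0 < size s)%N -> Znorm2 1 r <= hsnorm2 (dmx (nth d0 s 0)).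
Proof.
move=> s_gt0; have t_x0 : dtail (nth d0 s 0) = x0 by rewrite dtail_nth // take0.
have active0 : active 0 = [set x0].
  by apply/setP => v; rewrite !inE /visited take0 /= orbF.
have finished0 : finished 0 = set0.
  by apply/setP => v; rewrite !inE /visited take0 /= andbF.
have t_active : dtail (nth d0 s 0) \in active 1 by rewrite inE t_x0 eqxx.
apply: le_trans (Znorm2_stay_rows s_gt0 r t_active) _.
rewrite active0 sum_on_set1; apply: ler_sum => a _.
by rewrite /Zpart finished0 sum_on0 /weight take0 big_nil cmod2R expr1n mul1r t_x0 upd_eq.
Qed.

Lemma Znorm2_le k r : (0 < k <= size s)%N ->
  Znorm2 k r <= Znorm2 1 r * \prod_(d <- take k.-1 (behead s)) opnorm (M d.1) ^+ 2.
Proof.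
elim: k => [//|k IH] /andP[_ k_lt].
case: (posnP k) => [->|k_gt0]; first by rewrite take0 big_nil mulr1.
apply: le_trans (Znorm2_succ_le k_lt r) _.
have k1_lt : (k.-1 < size (behead s))%N by rewrite size_behead; lia.
have := take_nth d0 k1_lt; rewrite nth_behead prednK // => ->.
rewrite /= big_rcons /= mulrA mulrC ler_wpM2r ?sqr_ge0 //.
by apply: IH; rewrite k_gt0 ltnW.
Qed.

Lemma cmod2_sum_weight_le (r : labelling) : (0 < size s)%N -> (forall v, has (incident v) s) ->
  cmod2 (\sum_q weight (size s) q) <=
  n%:R * hsnorm2 (dmx (nth d0 s 0)) * \prod_(d <- behead s) opnorm (M d.1) ^+ 2.
Proof.
move=> s_gt0 s_covers.
have active_end : active (size s) = [set x0].
  by apply/setP => v; rewrite !inE /pending drop_size /= andbF orbF.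
have finished_end : finished (size s) = [set: V] :\ x0.
  by apply/setP => v; rewrite !inE /pending /visited drop_size take_size s_covers /= andbT.
have sum_Zpart : \sum_q weight (size s) q = \sum_a Zpart (size s) (upd r x0 a).
  by rewrite -(sum_on_setT r) -(setD1K (in_setT x0)) sum_on_setU1 ?setD11 // /Zpart finished_end.
have Znorm2_end : Znorm2 (size s) r = sqnorm (fun a => Zpart (size s) (upd r x0 a)).
  by rewrite /Znorm2 active_end sum_on_set1.
have sqnorm1 : sqnorm (fun _ : 'I_n => 1 : C) = n%:R.
  by rewrite /sqnorm sumr_const card_ord cmod2R expr1n.
have /= := cauchy_schwarz (fun _ => 1) (fun a => Zpart (size s) (upd r x0 a)).
under eq_bigr do rewrite mul1r.
rewrite -sum_Zpart -Znorm2_end sqnorm1 => /le_trans; apply; rewrite -mulrA ler_wpM2l ?ler0n //.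
have := @Znorm2_le (size s) r; rewrite s_gt0 leqnn => /(_ isT) /le_trans; apply.
rewrite -size_behead take_size ler_wpM2r ?Znorm2_first //.
by apply: prodr_ge0 => d _; apply: sqr_ge0.
Qed.

End AlongCircuit.

Section MainBound.
Variables (V E : finType) (src tgt : E -> V) (n : nat) (M : E -> 'M[C]_n).
Hypotheses (connected : forall u v, connect (und_adj src tgt) u v)
  (even_deg : forall v, ~~ odd (deg src tgt v)).

Lemma cmod2_TG_le f : (0 < n)%N ->
  cmod2 (TG src tgt M) <= n%:R * hsnorm2 (M f) * \prod_(e | e != f) opnorm (M e) ^+ 2.
Proof.
move=> n_gt0; have [x [d [s [ts closed_s df all_s]]]] := euler_circuit even_deg connected f.
case/andP: ts => ws us.
have s_perm : perm_eq (map fst (d :: s)) (index_enum E).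
  by apply: uniq_perm; rewrite ?index_enum_uniq // => e; rewrite all_s mem_index_enum.
have s_perm' : perm_eq (map fst s) [seq e <- index_enum E | e != f].
  have := perm_filter (predC1 f) s_perm; rewrite /= df eqxx /=.
  have f_notin : f \notin map fst s by move: us; rewrite /= df => /andP[].
  rewrite (eq_in_filter (a2 := predT)) ?filter_predT // => e e_in /=.
  by apply: contraTneq e_in => ->.
have TG_weight : \sum_q weight src tgt M (d :: s) (size (d :: s)) q = TG src tgt M.
  by apply: eq_bigr => q _; rewrite /weight take_size prod_dmx_perm.
have hs_d : hsnorm2 (dmx M d) = hsnorm2 (M f) by rewrite /dmx -df; case: d.2; rewrite ?hsnorm2_tr.
have := cmod2_sum_weight_le M d ws closed_s [ffun _ => Ordinal n_gt0] isT
  (covering_walk_visits connected ws all_s).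
rewrite TG_weight hs_d /= -(big_map fst xpredT (fun e => opnorm (M e) ^+ 2)).
by rewrite (perm_big _ s_perm') big_filter.
Qed.

Lemma cmod_TG_le_rank f : (0 < n)%N ->
  cmod (TG src tgt M) <= Num.sqrt ((\rank (M f) * n)%:R) * \prod_e opnorm (M e).
Proof.
move=> n_gt0; have op_ge0 e : 0 <= opnorm (M e) := opnorm_ge0 (M e).
rewrite -cmod2_le_sqr ?mulr_ge0 ?sqrtr_ge0 ?prodr_ge0 //.
apply: le_trans (cmod2_TG_le f n_gt0) _.
rewrite [\prod_e _](bigD1 f) //= prodrXl exprMn sqr_sqrtr // natrM.
set P := \prod_(e | e != f) opnorm (M e).
have -> : (\rank (M f))%:R * n%:R * (opnorm (M f) * P) ^+ 2 =
    n%:R * ((\rank (M f))%:R * opnorm (M f) ^+ 2) * P ^+ 2 by ring.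
by rewrite ler_wpM2r ?sqr_ge0 // ler_wpM2l ?ler0n // hsnorm2_le_rank.
Qed.

End MainBound.

Lemma TG_dim0 (V E : finType) (src tgt : E -> V) (M : E -> 'M[C]_0) :
  (0 < #|V|)%N -> TG src tgt M = 0.
Proof. by case/card_gt0P => v _; rewrite /TG big1 // => q _; case: (q v). Qed.

Lemma TG_edgeless (V E : finType) (src tgt : E -> V) n (M : E -> 'M[C]_n) :
  #|E| = 0%N -> weakly_connected src tgt -> TG src tgt M = n%:R.
Proof.
move=> E0 [V_gt0 connected]; have no_edge (e : E) : false by have := card0_eq E0 e; rewrite !inE.
have V1 : #|V| = 1%N.
  suff : (#|V| <= 1)%N by move: V_gt0; lia.
  apply/card_le1_eqP => u v _ _; case/connectP: (connected v u) => p.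
  by case: p => [_ -> //|a p /= /andP[/existsP [e _] _] _]; have := no_edge e.
rewrite /TG (eq_bigr (fun _ => 1)) => [|q _]; last by apply: big_pred0 => e; have := no_edge e.
by rewrite sumr_const card_ffun card_ord V1 expn1.
Qed.

End GraphSums.

Theorem theorem7p9 (R : realType) (V E : finType) (src tgt : E -> V) (n : nat)
  (M : E -> 'M[R[i]]_n) :
  weakly_connected src tgt ->
  (forall v : V, ~~ odd (deg src tgt v)) ->
  cmod (TG src tgt M) <= n%:R * \prod_(e : E) opnorm (M e) /\
  (forall (f : E) (r : nat), \rank (M f) = r ->
     cmod (TG src tgt M) <= Num.sqrt ((r * n)%:R) * \prod_(e : E) opnorm (M e)).
Proof.
move=> G_connected even_deg; have [V_gt0 connected] := G_connected.
have prod_ge0 : 0 <= \prod_(e : E) opnorm (M e) by apply: prodr_ge0 => e _; apply: opnorm_ge0.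
have [n0|n_gt0] := posnP n.
  subst n; rewrite TG_dim0 // /cmod Normc.normc0.
  by split=> [|f r _]; rewrite mulr_ge0 ?sqrtr_ge0.
split=> [|f _ <-]; last exact: cmod_TG_le_rank.
have [E0|/card_gt0P [f _]] := posnP #|E|.
  rewrite TG_edgeless // big_pred0 ?mulr1 ?cmod_nat // => e.
  by have := card0_eq E0 e; rewrite !inE.
apply: le_trans (cmod_TG_le_rank M connected even_deg f n_gt0) _.
rewrite ler_wpM2r // -[X in _ <= X]ger0_norm ?ler0n // -sqrtr_sqr ler_wsqrtr //.
by rewrite -natrX ler_nat leq_mul2r rank_leq_col orbT.
Qed.
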